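(* Let $q=p^n$, $p>2$ prime, $g\ge1$ with $\gcd(p,g)=1$, and let $C: y^2=x^{2g+1}+ax^{g+1}+bx$ be a genus $g$ hyperelliptic curve over $\mathbb{F}_q$ ($b\ne0$). Let $m=\frac{p-1}{2}$, let $W=(w_{i,j}(a,b))_{1\le i,j\le g}$ be the Cartier–Manin matrix of $C$, and fix $\sqrt b\in\mathbb{F}_{q^2}$. Then for $1\le i,j\le g$: 1. if $ip-j\equiv m\pmod g$, then $$w_{i,j}(a,b)=\sqrt{b}^{\,2m+\frac{m-(ip-j)}{g}}\; w_{i,j}\!\left(\tfrac{a}{\sqrt b},1\right)=\sqrt{b}^{\,2m+\frac{m-(ip-j)}{g}}\;P_{\frac{ip-j}{g}-\frac{p-1}{2g}}\!\left(-\frac{a}{2\sqrt b}\right),$$ where $w_{i,j}(\frac{a}{\sqrt b},1)$ denotes the corresponding entry of the Cartier–Manin matrix of $y^2=x^{2g+1}+\frac{a}{\sqrt b}x^{g+1}+x$, and the equality holds in $\mathbb{F}_{q^2}$ (and the value lies in $\mathbb{F}_q$); 2. otherwise $w_{i,j}(a,b)=0$.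
   Context: For a hyperelliptic curve $y^2=f(x)$ with $f$ monic of degree $2g+1$ over a field of characteristic $p>2$, write $f(x)^{(p-1)/2}=\sum_k c_k x^k$; the Cartier–Manin matrix is $W=(w_{i,j})_{1\le i,j\le g}$ with $w_{i,j}=c_{ip-j}$. $P_n$ denotes the $n$-th Legendre polynomial (its coefficients have only powers of 2 in denominators, so it is reduced modulo $p$). The notation $\sqrt b^{\,e}$ means the $e$-th power of the fixed element $\sqrt b$ (here $e$ is an integer). *)

From HB Require Import structures.
From mathcomp Require Import all_boot all_order all_algebra all_field.
Set Implicit Arguments. Unset Strict Implicit. Unset Printing Implicit Defensive.
Import Order.TTheory GRing.Theory Num.Theory.
Local Open Scope ring_scope.

Definition hyp_poly (F : fieldType) (g : nat) (a b : F) : {poly F} :=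
  'X^(2 * g + 1)%N + a *: 'X^(g + 1)%N + b *: 'X.

(* Cartier--Manin matrix of y^2 = f(x) in characteristic p, genus g:
   W = (w_{i,j})_{1<=i,j<=g}, w_{i,j} = c_{ip-j}, where
   f^((p-1)/2) = sum_k c_k x^k (and c_k = 0 for k < 0).
   The matrix entry at (i, j) : 'I_g x 'I_g is w_{i+1, j+1}. *)
Definition cm_entry (F : fieldType) (p : nat) (f : {poly F}) (i j : nat) : F :=
  if (j <= i * p)%N then (f ^+ ((p - 1)%N./2))`_(i * p - j) else 0.

Definition cartier_manin (F : fieldType) (p g : nat) (f : {poly F}) : 'M[F]_g :=
  \matrix_(i < g, j < g) cm_entry p f i.+1 j.+1.

(* n-th Legendre polynomial, via the classical explicit formula
   P_n(x) = 2^(-n) sum_{k=0}^n C(n,k)^2 (x-1)^(n-k) (x+1)^k,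
   whose only denominators are powers of 2; over a field of characteristic
   p > 2 this is the reduction of P_n modulo p. *)
Definition legendre (F : fieldType) (n : nat) : {poly F} :=
  (2 ^+ n)^-1 *: \sum_(k < n.+1)
     ('C(n, k) ^ 2)%:R *: (('X - 1) ^+ (n - k) * ('X + 1) ^+ k).

From HB Require Import structures.
From mathcomp Require Import all_boot all_order all_algebra all_field.
From mathcomp Require Import ring zify.
Import Order.TTheory GRing.Theory Num.Theory.
Set Implicit Arguments. Unset Strict Implicit. Unset Printing Implicit Defensive.
Local Open Scope ring_scope.

(* Write p = 2m + 1 and Q_(a,b) = X^2 + aX + b.  Since f = X * Q_(a,b)(X^g),
   f^m = X^m Q_(a,b)(X^g)^m, so the coefficient c_N of f^m vanishes unless
   N = m + t g, in which case c_N is the X^t coefficient of Q_(a,b)^m.  For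
   b = s^2 the substitution X -> X/s gives [X^t] Q_(a,s^2)^m =
   s^(2m-t) [X^t] Q_(a/s,1)^m.  Finally, in characteristic p the coefficients
   of Q^m, Q = X^2 + cX + 1, satisfy Bonnet's three-term recurrence for the
   Legendre polynomials at x = -c/2: this is the X^i coefficient of the
   identity 2 Q (Q^m)' + Q' Q^m = (2m + 1) Q' Q^m = 0.  The explicit Legendre
   formula satisfies the same recurrence (a binomial identity on binary forms)
   with the same initial values, so [X^t] Q^m = P_t(-c/2) for t <= 2m. *)

(* Conclude u = v from x = y when u - v and x - y coincide; this turns a
   known identity into a goal that agrees with it up to ring normalization. *)
Lemma eq_from_sub_eq (R : zmodType) (x y u v : R) :
  x = y -> u - v = x - y -> u = v.
Proof. by move=> -> /eqP; rewrite subrr subr_eq0 => /eqP. Qed.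

(* The squared-binomial identity behind Bonnet's recurrence for the explicit
   Legendre formula, coefficientwise. *)
Lemma binomial_square_bonnet (n k : nat) :
  (n.+2 * 'C(n.+2, k.+2) ^ 2 + n.+1 * ('C(n, k.+2) ^ 2 + 'C(n, k) ^ 2)
  = (2 * n + 3) * ('C(n.+1, k.+2) ^ 2 + 'C(n.+1, k.+1) ^ 2)
    + 2 * n.+1 * 'C(n, k.+1) ^ 2)%N.
Proof.
rewrite !binS.
set a := 'C(n, k); set b := 'C(n, k.+1); set c := 'C(n, k.+2).
have Ra := mul_bin_left n k; have Rb := mul_bin_left n k.+1.
rewrite -/a -/b -/c in Ra Rb.
have [le_nk | lt_kn] := leqP n k.
  have -> : b = 0%N by rewrite /b bin_small // ltnS.
  have -> : c = 0%N by rewrite /c bin_small // ltnS ltnW.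
  lia.
have [w ew] : exists w, n = (k.+1 + w)%N by exists (n - k.+1)%N; lia.
rewrite (_ : (n - k = w.+1)%N) in Ra; last by lia.
rewrite (_ : (n - k.+1 = w)%N) in Rb; last by lia.
subst n; have := congr1 (muln (b + c)) Ra; have := congr1 (muln (a + b)) Rb.
nia.
Qed.

Section HomogeneousSums.
Variable R : comNzRingType.
Variables u v : R.

(* The degree-d binary form sum_(k <= d) f(k) u^(d-k) v^k with coefficients f;
   the explicit Legendre formula is such a form in u = x - 1, v = x + 1. *)
Definition hsum (d : nat) (f : nat -> R) : R :=
  \sum_(k < d.+1) f k * (u ^+ (d - k) * v ^+ k).

Definition shift (f : nat -> R) (k : nat) : R := if k is k'.+1 then f k' else 0.

Lemma hsum_mull d f : f d.+1 = 0 -> u * hsum d f = hsum d.+1 f.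
Proof.
move=> fd; rewrite /hsum [in RHS]big_ord_recr /= fd mul0r addr0 mulr_sumr.
apply: eq_bigr => i _ /=.
by rewrite (subSn (ltnSE (ltn_ord i))) exprS; ring.
Qed.

Lemma hsum_mulr d f : v * hsum d f = hsum d.+1 (shift f).
Proof.
rewrite /hsum [in RHS]big_ord_recl /= mul0r add0r mulr_sumr.
by apply: eq_bigr => i _ /=; rewrite /bump /= add1n subSS exprSr; ring.
Qed.

Lemma hsumD d f h : hsum d (fun k => f k + h k) = hsum d f + hsum d h.
Proof. by rewrite /hsum -big_split; apply: eq_bigr => k _; rewrite mulrDl. Qed.

Lemma hsumB d f h : hsum d (fun k => f k - h k) = hsum d f - hsum d h.
Proof. by rewrite /hsum -sumrB; apply: eq_bigr => k _; rewrite mulrBl. Qed.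

Lemma hsumZ d c f : hsum d (fun k => c * f k) = c * hsum d f.
Proof. by rewrite /hsum mulr_sumr; apply: eq_bigr => k _; rewrite [RHS]mulrA. Qed.

Definition sqbin (n k : nat) : R := ('C(n, k) ^ 2)%:R.

Lemma sqbin_small n : sqbin n n.+1 = 0.
Proof. by rewrite /sqbin bin_small. Qed.

Lemma sqbin_bonnet n k :
  (n.+2)%:R * sqbin n.+2 k
  = (2 * n + 3)%:R * (sqbin n.+1 k + shift (sqbin n.+1) k)
    - (n.+1)%:R * (sqbin n k - 2 * shift (sqbin n) k + shift (shift (sqbin n)) k).
Proof.
rewrite /sqbin; case: k => [|[|k]] /=.
- by rewrite !bin0 !exp1n; ring.
- by rewrite !bin1 !bin0 !exp1n; ring.
- apply: eq_from_sub_eq (congr1 (fun x => x%:R : R) (binomial_square_bonnet n k)) _.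
  by ring.
Qed.

Lemma hsum_sqbin_bonnet n :
  (n.+2)%:R * hsum n.+2 (sqbin n.+2)
  = (2 * n + 3)%:R * ((u + v) * hsum n.+1 (sqbin n.+1))
    - (n.+1)%:R * ((v - u) ^+ 2 * hsum n (sqbin n)).
Proof.
have sq0 : sqbin n n.+2 = 0 by rewrite /sqbin bin_small.
have -> : (u + v) * hsum n.+1 (sqbin n.+1)
          = hsum n.+2 (sqbin n.+1) + hsum n.+2 (shift (sqbin n.+1)).
  by rewrite mulrDl hsum_mull ?sqbin_small // hsum_mulr.
have uu : u * (u * hsum n (sqbin n)) = hsum n.+2 (sqbin n).
  by rewrite hsum_mull ?sqbin_small // hsum_mull.
have uv : u * (v * hsum n (sqbin n)) = hsum n.+2 (shift (sqbin n)).
  by rewrite hsum_mulr hsum_mull //= sqbin_small.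
have vv : v * (v * hsum n (sqbin n)) = hsum n.+2 (shift (shift (sqbin n))).
  by rewrite !hsum_mulr.
have -> : (v - u) ^+ 2 * hsum n (sqbin n) = hsum n.+2 (sqbin n)
          - 2 * hsum n.+2 (shift (sqbin n)) + hsum n.+2 (shift (shift (sqbin n))).
  by rewrite -uu -uv -vv; ring.
rewrite -!hsumZ -hsumD -!hsumZ -hsumB -hsumD -!hsumZ -hsumB.
by apply: eq_bigr => k _; rewrite sqbin_bonnet.
Qed.

End HomogeneousSums.

Section LegendreRecurrence.
Variable F : fieldType.

Lemma horner_legendre n (x : F) :
  (legendre F n).[x] = (2 ^+ n)^-1 * hsum (x - 1) (x + 1) n (sqbin F n).
Proof.
rewrite /legendre hornerZ horner_sum; congr (_ * _); apply: eq_bigr => k _.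
by rewrite hornerZ hornerM !horner_exp !hornerE.
Qed.

Lemma legendre0 (x : F) : (legendre F 0).[x] = 1.
Proof.
by rewrite horner_legendre /hsum big_ord1 /sqbin /= invr1 bin0 subnn !expr0 !mul1r.
Qed.

Hypothesis two_neq0 : (2 : F) != 0.

Lemma legendre1 (x : F) : (legendre F 1).[x] = x.
Proof.
rewrite horner_legendre /hsum !big_ord_recr big_ord0 /sqbin /= bin0 bin1 /=.
by field.
Qed.

Lemma legendre_bonnet (x : F) n :
  (n.+2)%:R * (legendre F n.+2).[x]
  = (2 * n + 3)%:R * x * (legendre F n.+1).[x] - (n.+1)%:R * (legendre F n).[x].
Proof.
have exp2_neq0 k : (2 : F) ^+ k != 0 by rewrite expf_neq0.
rewrite !horner_legendre; apply: (mulfI (exp2_neq0 n.+2)).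
apply: eq_from_sub_eq (hsum_sqbin_bonnet (x - 1) (x + 1) n) _.
by rewrite !exprS; field; rewrite exp2_neq0 two_neq0.
Qed.

End LegendreRecurrence.

Lemma bonnet_uniq (F : fieldType) (x : F) (N : nat) (h w : nat -> F) :
  h 0 = w 0 -> h 1 = w 1 ->
  (forall n, (n.+2)%:R * h n.+2 = (2 * n + 3)%:R * x * h n.+1 - (n.+1)%:R * h n) ->
  (forall n, (n.+2)%:R * w n.+2 = (2 * n + 3)%:R * x * w n.+1 - (n.+1)%:R * w n) ->
  (forall n, (n.+2 <= N)%N -> (n.+2)%:R != 0 :> F) ->
  forall t, (t <= N)%N -> h t = w t.
Proof.
move=> hw0 hw1 h_rec w_rec unit_N.
have pair_eq n : (n.+1 <= N)%N -> h n = w n /\ h n.+1 = w n.+1.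
  elim: n => [|n IH] ltnN; first by [].
  have [eq_n eq_n1] := IH (ltnW ltnN); split=> //.
  by apply: (mulfI (unit_N n ltnN)); rewrite h_rec w_rec eq_n eq_n1.
by case=> [|t] // le_tN; case: (pair_eq t le_tN).
Qed.

Lemma natr_neq0_pchar (R : nzSemiRingType) (p n : nat) :
  p \in [pchar R] -> (0 < n < p)%N -> n%:R != 0 :> R.
Proof.
move=> chR /andP[n_gt0 n_ltp]; rewrite -(dvdn_pcharf chR).
by apply/negP => /(dvdn_leq n_gt0); lia.
Qed.

Definition quad (F : fieldType) (c d : F) : {poly F} := 'X^2 + c *: 'X + d%:P.

Section QuadraticPower.
Variable F : fieldType.
Variable m : nat.
Hypothesis pchar_odd : (2 * m).+1 \in [pchar F].
Variable c : F.

Let Q : {poly F} := quad c 1.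
Let q (t : nat) : F := (Q ^+ m)`_t.

Let m_gt0 : (0 < m)%N.
Proof. by case: m pchar_odd => // /pcharf_prime. Qed.

Let two_neq0 : (2 : F) != 0.
Proof. by apply: (natr_neq0_pchar pchar_odd); lia. Qed.

(* Since 2m + 1 = 0 in F, Q^m solves 2 Q y' + Q' y = 0. *)
Lemma quad_pow_deriv : 2 *: (Q * (Q ^+ m)^`()) + Q^`() * Q ^+ m = 0.
Proof.
rewrite deriv_exp mulrnAr mulrCA -exprS prednK //.
rewrite scaler_nat -mulrnA -mulrSr -mulr_natr -polyC_natr.
by rewrite mulnC (pcharf0 pchar_odd) mulr0.
Qed.

Lemma quad_pow_deriv_coef i :
  2 * (('X^2 * (Q ^+ m)^`())`_i + c * ('X * (Q ^+ m)^`())`_i + ((Q ^+ m)^`())`_i)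
  + ('X * Q ^+ m)`_i *+ 2 + c * q i = 0.
Proof.
have coef_i := congr1 (fun P : {poly F} => P`_i) quad_pow_deriv.
rewrite coef0 /q /Q /quad polyC1 /= in coef_i *.
have d1 : (1 : {poly F})^`() = 0 by rewrite -polyC1 derivC.
set D := (_ ^+ m)^`() in coef_i *; set H := _ ^+ m in coef_i *.
rewrite !mulrDl -!scalerAl mul1r !derivD derivXn derivZ derivX d1 addr0 expr1 in coef_i.
rewrite !mulrDl -scalerAl mul1r !coefD !coefZ in coef_i.
by rewrite -[RHS]coef_i !coefD !coefZ; ring.
Qed.

(* Initial values q_0 = 1 and q_1 = -c/2, the latter from the X^0 coefficient
   of the differential identity. *)
Lemma quad_pow_coef0 : q 0 = 1.
Proof.
by rewrite /q /Q /quad -horner_coef0 horner_exp !hornerE expr2 mul0r add0r expr1n.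
Qed.

Lemma quad_pow_coef1 : q 1 = - (c / 2).
Proof.
have := quad_pow_deriv_coef 0.
rewrite coefXnM coefXM coef_deriv coefXM /= sub0n quad_pow_coef0 => coef_eq.
apply: (mulfI two_neq0); apply: eq_from_sub_eq coef_eq _; rewrite /q.
by field.
Qed.

Lemma quad_pow_bonnet n :
  (n.+2)%:R * q n.+2 = (2 * n + 3)%:R * (- (c / 2)) * q n.+1 - (n.+1)%:R * q n.
Proof.
have := quad_pow_deriv_coef n.+1.
rewrite coefXnM coefXM !coef_deriv coefXM /=.
have -> : (if (n.+1 < 2)%N then 0 else (Q ^+ m)`_(n.+1 - 2).+1 *+ (n.+1 - 2).+1)
          = q n *+ n by case: n => //= n; rewrite !subSS subn0.
move=> coef_eq.
apply: (mulfI two_neq0); apply: eq_from_sub_eq coef_eq _; rewrite /q.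
by field.
Qed.

Lemma quad_pow_legendre t :
  (t <= 2 * m)%N -> ((quad c 1) ^+ m)`_t = (legendre F t).[- (c / 2)].
Proof.
apply: (bonnet_uniq (h := q) (w := fun t => (legendre F t).[- (c / 2)])).
- by rewrite quad_pow_coef0 legendre0.
- by rewrite quad_pow_coef1 legendre1.
- exact: quad_pow_bonnet.
- exact: legendre_bonnet.
- by move=> n le_n2m; apply: (natr_neq0_pchar pchar_odd); lia.
Qed.

End QuadraticPower.

Lemma hyp_poly_quad (F : fieldType) g (a b : F) :
  hyp_poly g a b = 'X * (quad a b \Po 'X^g).
Proof.
rewrite /hyp_poly /quad !comp_polyD comp_polyZ comp_polyX comp_polyC.
rewrite (rmorphXn (comp_poly 'X^g)) /= comp_polyX !mulrDr.
congr (_ + _ + _).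
- by rewrite -exprM mulnC addn1 exprS.
- by rewrite -scalerAr addn1 exprS.
- by rewrite mulrC mul_polyC.
Qed.

Lemma coef_hyp_pow (F : fieldType) g (a b : F) m N : (0 < g)%N ->
  ((hyp_poly g a b) ^+ m)`_N =
  if (m <= N)%N && (g %| N - m)%N then ((quad a b) ^+ m)`_((N - m) %/ g) else 0.
Proof.
move=> g_gt0; rewrite hyp_poly_quad exprMn -(rmorphXn (comp_poly 'X^g)) /=.
by rewrite coefXnM coef_comp_poly_Xn // ltnNge; case: leqP.
Qed.

Lemma cm_entry_hyp_at (F : fieldType) p g (a b : F) i j t : (0 < g)%N ->
  (j <= i * p)%N -> (i * p - j = (p - 1) %/ 2 + t * g)%N ->
  cm_entry p (hyp_poly g a b) i j = ((quad a b) ^+ ((p - 1) %/ 2))`_t.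
Proof.
move=> g_gt0 le_jip eN.
by rewrite /cm_entry le_jip -divn2 coef_hyp_pow // eN leq_addr addKn dvdn_mull // mulnK.
Qed.

Lemma cm_entry_hyp_eq0 (F : fieldType) p g (a b : F) i j : (0 < g)%N ->
  ((j <= i * p)%N -> ((p - 1) %/ 2 <= i * p - j)%N ->
     ~~ (g %| i * p - j - (p - 1) %/ 2)%N) ->
  cm_entry p (hyp_poly g a b) i j = 0.
Proof.
move=> g_gt0 ndvd; rewrite /cm_entry -divn2 coef_hyp_pow //.
case: ifP => // le_jip; case: ifP => // /andP[le_mN dvd].
by move: (ndvd le_jip le_mN); rewrite dvd.
Qed.

Lemma coef_comp_scaleX (F : fieldType) (P : {poly F}) (d : F) t :
  (P \Po (d *: 'X))`_t = d ^+ t * P`_t.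
Proof.
rewrite comp_polyE coef_sum.
rewrite (eq_bigr (fun i : 'I_(size P) => if i == t :> nat then d ^+ t * P`_t else 0)).
  rewrite -big_mkcond (big_ord1_eq _ (fun _ => d ^+ t * P`_t)).
  by case: ltnP => // le_P_t; rewrite nth_default // mulr0.
move=> i _; rewrite exprZn !coefZ coefXn.
case: eqP => [->|ne_it]; first by rewrite eqxx mulr1 mulrC.
by case: eqP => [eq_ti|]; [case: ne_it | rewrite !mulr0].
Qed.

(* The substitution X -> X/s normalizes the constant term: for t <= 2m the X^t
   coefficient of Q_(A,s^2)^m is s^(2m-t) times that of Q_(A/s,1)^m. *)
Lemma quad_pow_scale (F : fieldType) (A s : F) m t : s != 0 -> (t <= 2 * m)%N ->
  ((quad A (s ^+ 2)) ^+ m)`_t = s ^+ (2 * m - t) * ((quad (A / s) 1) ^+ m)`_t.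
Proof.
move=> s_neq0 le_t2m.
have -> : quad A (s ^+ 2) = s ^+ 2 *: (quad (A / s) 1 \Po (s^-1 *: 'X)).
  rewrite /quad !comp_polyD comp_polyZ comp_polyX comp_polyC.
  rewrite (rmorphXn (comp_poly _)) /= comp_polyX.
  rewrite !scalerDr exprZn !scalerA -exprMn divff // expr1n scale1r.
  have -> : s ^+ 2 * (A / s) / s = A by field.
  by rewrite scale_polyC mulr1.
rewrite exprZn -(rmorphXn (comp_poly _)) /= coefZ coef_comp_scaleX -exprM mulrA.
by rewrite -{1}(subnK le_t2m) exprD exprVn mulfK ?expf_neq0.
Qed.

Lemma rmorph_quad_pow_coef (K L : fieldType) (phi : {rmorphism K -> L}) (a b : K) m t :
  phi (((quad a b) ^+ m)`_t) = ((quad (phi a) (phi b)) ^+ m)`_t.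
Proof.
rewrite -coef_map rmorphXn /quad !rmorphD /=.
by rewrite map_polyXn map_polyZ map_polyX map_polyC.
Qed.

Lemma odd_prime_half p : prime p -> (2 < p)%N -> p = (2 * ((p - 1) %/ 2)).+1.
Proof.
move=> p_pr p_gt2; have := odd_double_half p.
by case: (even_prime p_pr) => [p2 | ->]; [rewrite p2 in p_gt2 | lia].
Qed.

(* For P = i p with i <= g and 0 < J <= g, the integer condition
   g | (P - J) - m means P - J = m + t g with t <= 2m, and then the exponent
   2m + (m - (P - J))/g occurring in the theorem is 2m - t. *)
Lemma cm_index_dvd (g m P J : nat) :
  (0 < g)%N -> (m < P)%N -> (0 < J <= g)%N -> (P <= g * (2 * m).+1)%N ->
  (g%:Z %| (P%:Z - J%:Z) - m%:Z)%Z ->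
  exists t : nat, [/\ (J <= P)%N, (P - J = m + t * g)%N, (t <= 2 * m)%N &
    2 * m%:Z + ((m%:Z - (P%:Z - J%:Z)) %/ g%:Z)%Z = (2 * m - t)%N :> int].
Proof.
move=> g_gt0 lt_mP /andP[J_gt0 le_Jg] le_P /dvdzP[q eq_q].
have [t eq_qt] : exists t : nat, q = t%:Z.
  by exists `|q|%N; rewrite gez0_abs //; nia.
subst q; have le_t2m : (t <= 2 * m)%N by nia.
exists t; split; [lia | lia | done |].
have -> : m%:Z - (P%:Z - J%:Z) = - t%:Z * g%:Z by rewrite mulNr -eq_q; lia.
by rewrite mulzK //; lia.
Qed.

Lemma cm_index_ndvd (g m P J : nat) : ~~ (g%:Z %| (P%:Z - J%:Z) - m%:Z)%Z ->
  (J <= P)%N -> (m <= P - J)%N -> ~~ (g %| P - J - m)%N.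
Proof.
move=> ndvd le_JP le_mN; apply: contra ndvd => dvd.
by have -> : (P%:Z - J%:Z) - m%:Z = (P - J - m)%N%:Z by lia.
Qed.

Theorem theorem4 (p n g : nat) (K L : finFieldType) (phi : {rmorphism K -> L})
  (a b : K) (s : L) :
  prime p -> (2 < p)%N -> p \in [pchar K] -> #|K| = (p ^ n)%N ->
  (0 < g)%N -> coprime p g ->
  b != 0 -> separable_poly (hyp_poly g a b) ->
  #|L| = (#|K| ^ 2)%N -> s ^+ 2 = phi b ->
  let m := ((p - 1) %/ 2)%N in
  let W := cartier_manin p g (hyp_poly g a b) in
  forall i j : 'I_g,
    let k : int := ((i.+1 * p)%:Z - (j.+1)%:Z)%R in
    ((g%:Z %| k - m%:Z)%Z ->
       phi (W i j) = s ^ (2 * m%:Z + ((m%:Z - k) %/ g%:Z)%Z)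
                       * cartier_manin p g (hyp_poly g (phi a / s) 1) i j
     /\ phi (W i j) = s ^ (2 * m%:Z + ((m%:Z - k) %/ g%:Z)%Z)
                       * (legendre L ((i.+1 * p - j.+1 - m) %/ g)).[- (phi a / (2 * s))])
    /\ (~~ (g%:Z %| k - m%:Z)%Z -> W i j = 0).
Proof.
move=> p_pr p_gt2 chK _ g_gt0 _ b_neq0 _ _ s2 m W i j k.
have p_odd : p = (2 * m).+1 := odd_prime_half p_pr p_gt2.
have chL : (2 * m).+1 \in [pchar L] by rewrite -p_odd (rmorph_pchar phi chK).
have s_neq0 : s != 0.
  by apply: contraNneq b_neq0 => s0; rewrite -(fmorph_eq0 phi) -s2 s0 expr0n.
rewrite /W !mxE /k; split=> [dvd | ndvd].
  have lt_mP : (m < i.+1 * p)%N by rewrite p_odd; nia.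
  have le_P : (i.+1 * p <= g * (2 * m).+1)%N by rewrite -p_odd leq_mul2r ltn_ord orbT.
  have le_Jg : (0 < j.+1 <= g)%N := ltn_ord j.
  have [t [le_JP eN le_t2m ->]] := cm_index_dvd g_gt0 lt_mP le_Jg le_P dvd.
  have -> : ((i.+1 * p - j.+1 - m) %/ g = t)%N by rewrite eN addKn mulnK.
  rewrite -exprnP !(cm_entry_hyp_at _ _ g_gt0 le_JP eN).
  rewrite rmorph_quad_pow_coef -s2 quad_pow_scale //; split=> //.
  by rewrite quad_pow_legendre // [2 * s]mulrC invfM mulrA.
apply: cm_entry_hyp_eq0 => // le_JP le_mN.
exact: cm_index_ndvd ndvd le_JP le_mN.
Qed.
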